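(* Let $X$ be a quandle. The following are equivalent: (1) $X$ is a kei; (2) the identity map of $X$ is a good involution; (3) $X$ has a good involution which is a quandle homomorphism; (4) every good involution of $X$ is a quandle homomorphism, and $X$ has at least one good involution.
   Context: A quandle is a set $X$ with a binary operation $(x,y)\mapsto x^y$ such that $x^x=x$; for all $x,y$ there is a unique $z$ with $z^y=x$ (written $x^{y^{-1}}$); and $(x^y)^z=(x^z)^{(y^z)}$. A kei is a quandle with $(x^y)^y=x$ for all $x,y$ (equivalently $x^y=x^{y^{-1}}$). A good involution is a map $\rho:X\to X$ with $\rho\circ\rho={\rm id}$, $\rho(x^y)=\rho(x)^y$ and $x^{\rho(y)}=x^{y^{-1}}$ for all $x,y$. A quandle homomorphism is a map $f$ with $f(x^y)=f(x)^{f(y)}$. *)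

Set Implicit Arguments.

(* A quandle structure on X with operation op x y = x^y. *)
Definition is_quandle (X : Type) (op : X -> X -> X) : Prop :=
  (forall x, op x x = x) /\
  (forall x y, exists z, op z y = x /\ forall z', op z' y = x -> z' = z) /\
  (forall x y z, op (op x y) z = op (op x z) (op y z)).

(* x^{y^{-1}} = w means: w is the (unique) element with w^y = x. *)
Definition is_rinv (X : Type) (op : X -> X -> X) (x y w : X) : Prop :=
  op w y = x.

Definition is_kei (X : Type) (op : X -> X -> X) : Prop :=
  forall x y, op (op x y) y = x.

Definition good_involution (X : Type) (op : X -> X -> X) (rho : X -> X) : Prop :=
  (forall x, rho (rho x) = x) /\
  (forall x y, rho (op x y) = op (rho x) y) /\
  (forall x y, is_rinv op x y (op x (rho y))).

Definition quandle_hom (X Y : Type) (opX : X -> X -> X) (opY : Y -> Y -> Y)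
  (f : X -> Y) : Prop :=
  forall x y, f (opX x y) = opY (f x) (f y).


Set Implicit Arguments.

(* A good involution [rho] which is a homomorphism satisfies
   [x^(rho y) = rho (rho x ^ y) = x^y], so the axiom [x^(rho y) = x^(y^-1)]
   becomes the kei law.  Conversely, in a kei both [x^(rho y)] and [x^y] are
   [x^(y^-1)], hence equal by right cancellation, and then
   [rho (x^y) = rho x ^ y = rho x ^ rho y]. *)

Lemma quandle_rcancel (X : Type) (op : X -> X -> X) (HX : is_quandle op)
    (a b y : X) :
  op a y = op b y -> a = b.
Proof.
  intros Hab. destruct HX as [_ [Huniq _]].
  destruct (Huniq (op a y) y) as [z [_ Hz]].
  rewrite (Hz a eq_refl). symmetry. apply Hz. now rewrite Hab.
Qed.

Lemma kei_iff_id_good_involution (X : Type) (op : X -> X -> X) :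
  is_kei op <-> good_involution op (fun x => x).
Proof.
  split.
  - intros Hkei. repeat split; intros x y; apply Hkei.
  - intros [_ [_ Hinv]] x y. apply Hinv.
Qed.

Lemma id_quandle_hom (X : Type) (op : X -> X -> X) :
  quandle_hom op op (fun x => x).
Proof. intros x y. reflexivity. Qed.

Lemma good_hom_op_involution (X : Type) (op : X -> X -> X) (rho : X -> X) :
  good_involution op rho -> quandle_hom op op rho ->
  forall x y, op x (rho y) = op x y.
Proof.
  intros [Hinvol [Hcompat _]] Hhom x y.
  rewrite <- (Hinvol (op x (rho y))), Hcompat, <- Hhom, !Hinvol.
  reflexivity.
Qed.

Lemma kei_of_good_hom (X : Type) (op : X -> X -> X) (rho : X -> X) :
  good_involution op rho -> quandle_hom op op rho -> is_kei op.
Proof.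
  intros Hgood Hhom x y.
  rewrite <- (good_hom_op_involution Hgood Hhom x y).
  apply (proj2 (proj2 Hgood)).
Qed.

Lemma kei_good_op_involution (X : Type) (op : X -> X -> X)
    (HX : is_quandle op) (rho : X -> X) :
  is_kei op -> good_involution op rho -> forall x y, op x (rho y) = op x y.
Proof.
  intros Hkei [_ [_ Hinv]] x y.
  apply (quandle_rcancel HX _ _ y). rewrite Hkei. apply Hinv.
Qed.

Lemma kei_good_involution_hom (X : Type) (op : X -> X -> X)
    (HX : is_quandle op) (rho : X -> X) :
  is_kei op -> good_involution op rho -> quandle_hom op op rho.
Proof.
  intros Hkei Hgood x y.
  rewrite (kei_good_op_involution HX Hkei Hgood).
  apply (proj1 (proj2 Hgood)).
Qed.

Theorem proposition3p4 (X : Type) (op : X -> X -> X) (HX : is_quandle op) :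
  (is_kei op <-> good_involution op (fun x => x)) /\
  (good_involution op (fun x => x) <->
     exists rho, good_involution op rho /\ quandle_hom op op rho) /\
  ((exists rho, good_involution op rho /\ quandle_hom op op rho) <->
     ((forall rho, good_involution op rho -> quandle_hom op op rho) /\
      exists rho, good_involution op rho)).
Proof.
  pose proof (kei_iff_id_good_involution op) as Hkei_id.
  split; [exact Hkei_id |]. split.
  - split.
    + intros Hid. exists (fun x => x). split; [exact Hid | apply id_quandle_hom].
    + intros [rho [Hgood Hhom]]. apply Hkei_id.
      exact (kei_of_good_hom Hgood Hhom).
  - split.
    + intros [rho [Hgood Hhom]]. split.
      * intros sigma. apply (kei_good_involution_hom HX).
        exact (kei_of_good_hom Hgood Hhom).
      * exists rho. exact Hgood.
    + intros [Hall [rho Hgood]]. exists rho. split; [exact Hgood | now apply Hall].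
Qed.
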